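(* Let $k\ge2$ and let $u_1,\dots,u_k,v_1,\dots,v_k$ be nonnegative integers with $$u_1<u_2<v_1<u_3<v_2<u_4<v_3<\dots<u_k<v_{k-1}<v_k.$$ Then $$\det F_{\mathbf u,\mathbf v}=(-y)^{\sum_{i=1}^{k-1}(v_i-u_{i+1}+1)}\,q^{\sum_{i=1}^{k-1}\left[\binom{v_i}2-\binom{u_{i+1}-1}2\right]}\cdot F_{u_2-u_1-1}(xq^{u_1},yq^{u_1},q)\,F_{v_k-v_{k-1}-1}(xq^{v_{k-1}+1},yq^{v_{k-1}+1},q)\prod_{i=1}^{k-2}F_{u_{i+2}-v_i-2}(xq^{v_i+1},yq^{v_i+1},q),$$ with the convention $F_{-1}:=0$.
   Context: $F_n(x,y,q)=\sum_{\pi}x^{s(\pi)}y^{d(\pi)}q^{rb(\pi)}$, where: - $\pi$ ranges over layered matchings of $[n]$, i.e. set partitions whose blocks are consecutive intervals $[1,i_1]/\dots/[i_{k-1}+1,n]$ of size $1$ or $2$; - $s(\pi)$ and $d(\pi)$ are the numbers of blocks of size $1$ and $2$; - for $\pi=B_1/\dots/B_k$ with $\min B_1<\dots<\min B_k$, $rb(\pi)$ is the number of pairs $(b,B_j)$ with $b\in B_i$, $j>i$, $\max B_j>b$. Equivalently, $F_0=1$, $F_1=x$, and $F_n=xq^{n-1}F_{n-1}+yq^{n-2}F_{n-2}$ for $n\ge2$. Let $F$ be the infinite matrix with rows and columns indexed by $0,1,2,\dots$. Its $(a,b)$ entry is $F_{b-a}(xq^a,yq^a,q)$ if $b\ge a$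 and $0$ if $b<a$. $F_{\mathbf u,\mathbf v}$ is the $k\times k$ submatrix with rows $u_1<\dots<u_k$ and columns $v_1<\dots<v_k$. $\binom{m}{2}=m(m-1)/2$. *)

From HB Require Import structures.
From mathcomp Require Import all_boot all_order all_algebra.
Set Implicit Arguments. Unset Strict Implicit. Unset Printing Implicit Defensive.
Import Order.TTheory GRing.Theory Num.Theory.
Local Open Scope ring_scope.

(* Fpair n = (F_n, F_{n+1}) evaluated at (x, y, q). *)
Fixpoint Fpair (R : comRingType) (x y q : R) (n : nat) : R * R :=
  match n with
  | 0 => (1, x)
  | m.+1 => let: (a, b) := Fpair x y q m in
            (b, x * q ^+ m.+1 * b + y * q ^+ m * a)
  end.

Definition F (R : comRingType) (n : nat) (x y q : R) : R := (Fpair x y q n).1.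

Definition Fz (R : comRingType) (n : int) (x y q : R) : R :=
  match n with
  | Posz m => F m x y q
  | Negz _ => 0
  end.

Definition Fmat_entry (R : comRingType) (x y q : R) (a b : nat) : R :=
  if (a <= b)%N then F (b - a) (x * q ^+ a) (y * q ^+ a) q else 0.

(* The k x k submatrix with rows u_1..u_k and columns v_1..v_k (1-based u, v). *)
Definition Fsub (R : comRingType) (x y q : R) (k : nat) (u v : nat -> nat)
  : 'M[R]_k :=
  \matrix_(i < k, j < k) Fmat_entry x y q (u i.+1) (v j.+1).

From HB Require Import structures.
From mathcomp Require Import all_boot all_order all_algebra.
From mathcomp Require Import ring zify.
Import Order.TTheory GRing.Theory Num.Theory.
Set Implicit Arguments. Unset Strict Implicit. Unset Printing Implicit Defensive.
Local Open Scope ring_scope.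

(* Row a of F, read along the columns c, is (0, ..., 0, 1, F_1, F_2, ...) with
   the 1 in column a; the recurrence of F_n makes it a solution of the linear
   recurrence  s_(c+2) = x q^(c+1) s_(c+1) + y q^c s_c  from column a-1 on.
   For two solutions f, g of a second-order recurrence, the Casoratian
   f_c g_(c+1) - g_c f_(c+1) is multiplied by -r_c at each step, and the
   "cross" f_c g_d - g_c f_d equals the Casoratian at c times the solution
   h with h_c = 0, h_(c+1) = 1.  Applied to two rows a < b of F this gives the
   two-row minor formula [two_row_minor], the heart of the argument.

   Because of the interlacing u_1 < u_2 < v_1 < u_3 < ..., the first column of
   F_(u,v) has only two nonzero entries.  Laplace expansion along it yields two
   minors of the same interlaced shape, which by induction on k factor as
   F(u_1, u_2 - 1) times a common tail; the two-row minor formula then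
   recombines them. *)

Section LinearRecurrence.
Variables (R : comPzRingType) (p r : nat -> R).

Definition solves_from (n0 : nat) (s : nat -> R) : Prop :=
  forall c, (n0 <= c)%N -> s c.+2 = p c * s c.+1 + r c * s c.

Lemma solves_from_comb n0 (a b : R) f g :
  solves_from n0 f -> solves_from n0 g ->
  solves_from n0 (fun d => a * f d + b * g d).
Proof. by move=> Hf Hg c hc /=; rewrite Hf // Hg //; ring. Qed.

Lemma solves_from_unique n0 f g c :
  solves_from n0 f -> solves_from n0 g -> (n0 <= c)%N ->
  f c = g c -> f c.+1 = g c.+1 -> forall m, f (c + m)%N = g (c + m)%N.
Proof.
move=> Hf Hg hc e0 e1 m.
suff : f (c + m)%N = g (c + m)%N /\ f (c + m)%N.+1 = g (c + m)%N.+1 by case.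
elim: m => [|m [IH0 IH1]]; first by rewrite addn0; split.
have hcm : (n0 <= c + m)%N by apply: leq_trans hc (leq_addr m c).
by rewrite addnS Hf // Hg // IH0 IH1.
Qed.

Definition casoratian (f g : nat -> R) (c : nat) : R :=
  f c * g c.+1 - g c * f c.+1.

Lemma casoratian_step n0 f g c :
  solves_from n0 f -> solves_from n0 g -> (n0 <= c)%N ->
  casoratian f g c.+1 = - r c * casoratian f g c.
Proof. by move=> Hf Hg hc; rewrite /casoratian Hf // Hg //; ring. Qed.

Lemma casoratian_iter n0 f g c m :
  solves_from n0 f -> solves_from n0 g -> (n0 <= c)%N ->
  casoratian f g (c + m)%N = (\prod_(c <= i < c + m) - r i) * casoratian f g c.
Proof.
move=> Hf Hg hc; elim: m => [|m IH]; first by rewrite addn0 big_geq ?mul1r.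
have hcm : (n0 <= c + m)%N by apply: leq_trans hc (leq_addr m c).
rewrite addnS (casoratian_step Hf Hg hcm) IH big_nat_recr ?leq_addr //=.
by rewrite mulrA (mulrC (- r _)).
Qed.

(* For solutions f, g, the sequence d |-> f_c g_d - g_c f_d is the solution
   vanishing at c, hence a multiple of the solution h with h_c = 0, h_(c+1) = 1;
   comparing at c + 1 identifies the factor as the Casoratian at c. *)
Lemma cross_solution n0 f g h c m :
  solves_from n0 f -> solves_from n0 g -> solves_from n0 h -> (n0 <= c)%N ->
  h c = 0 -> h c.+1 = 1 ->
  f c * g (c + m)%N - g c * f (c + m)%N = casoratian f g c * h (c + m)%N.
Proof.
move=> Hf Hg Hh hc h0 h1.
have := solves_from_unique (solves_from_comb (f c) (- g c) Hg Hf)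
  (solves_from_comb (casoratian f g c) 0 Hh Hh) hc _ _ m.
rewrite /= !mul0r !addr0 !mulNr; apply.
- by rewrite h0 mulr0 (mulrC (f c)) subrr.
- by rewrite h1 mulr1.
Qed.

End LinearRecurrence.

Lemma det_first_col_two (R : comPzRingType) n (A : 'M[R]_n.+2) :
  (forall i : 'I_n.+2, (2 <= i)%N -> A i ord0 = 0) ->
  \det A = A ord0 ord0 * \det (row' ord0 (col' ord0 A))
          - A (lift ord0 ord0) ord0 * \det (row' (lift ord0 ord0) (col' ord0 A)).
Proof.
move=> A0; rewrite (expand_det_col _ ord0) !big_ord_recl big1 ?addr0; last first.
  by move=> i _; rewrite A0 // mul0r.
by rewrite /cofactor /= expr0 mul1r expr1 mulN1r mulrN.
Qed.

Section InfiniteMatrix.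
Variables (R : comNzRingType) (x y q : R).
Local Notation G := (Fmat_entry x y q).

Lemma F_rec n (X Y : R) :
  F n.+2 X Y q = X * q ^+ n.+1 * F n.+1 X Y q + Y * q ^+ n * F n X Y q.
Proof. by rewrite /F /=; case: (Fpair X Y q n). Qed.

Lemma G_below a b : (b < a)%N -> G a b = 0.
Proof. by rewrite /Fmat_entry ltnNge => /negbTE ->. Qed.

Lemma G_diag a : G a a = 1.
Proof. by rewrite /Fmat_entry leqnn subnn. Qed.

(* Row a of F solves the recurrence p_c = x q^(c+1), r_c = y q^c from
   column a - 1 on: F_(n+2)(x q^a, y q^a) unfolds with exponents shifted by a. *)
Lemma G_row_solves a n : (a <= n.+1)%N ->
  solves_from (fun c => x * q ^+ c.+1) (fun c => y * q ^+ c) n (G a).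
Proof.
move=> an c nc; have : (a <= c.+1)%N by apply: leq_trans an _.
rewrite leq_eqVlt ltnS => /orP [/eqP ->|ac].
  by rewrite G_diag (G_below (ltnSn c)) /Fmat_entry leqnSn subSnn mulr1 mulr0 addr0.
rewrite /Fmat_entry ac (leqW ac) (leqW (leqW ac)) !subSn ?(leqW ac) // F_rec.
rewrite -!(mulrA _ (q ^+ a)) -!exprD addnS subnKC //.
Qed.

Lemma casoratian_rows_start a b : (a < b)%N ->
  casoratian (G a) (G b) b.-1 = G a b.-1.
Proof.
move=> ab; have b0 : (0 < b)%N by apply: leq_ltn_trans ab.
have hb : (b.-1 < b)%N by rewrite prednK.
rewrite /casoratian prednK // G_diag (G_below hb).
by rewrite mulr1 mul0r subr0.
Qed.

Lemma prod_neg_yq c m :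
  \prod_(c <= i < c + m) - (y * q ^+ i) =
  (- y) ^+ m * q ^+ ('C(c + m, 2) - 'C(c, 2)).
Proof.
under eq_bigr do rewrite -mulNr.
rewrite big_split /= prodr_const_nat addKn prodrXr -!bin2_sum.
by rewrite (@big_cat_nat _ _ _ c 0 (c + m)) ?leq_addr //= addKn.
Qed.

Lemma two_row_minor a b c d : (a < b)%N -> (b <= c)%N -> (c <= d)%N ->
  G a c * G b d - G b c * G a d =
  G a (b - 1) * (- y) ^+ (c - b + 1) * q ^+ ('C(c, 2) - 'C(b - 1, 2)) * G c.+1 d.
Proof.
move=> ab bc cd; have b0 : (0 < b)%N by apply: leq_ltn_trans ab.
have [ac1 bc1] : (a <= c.+1)%N /\ (b <= c.+1)%N by split; lia.
have [ab1 bb1] : (a <= b.-1.+1)%N /\ (b <= b.-1.+1)%N by split; lia.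
rewrite -(subnKC cd) (cross_solution _ (G_row_solves ac1) (G_row_solves bc1)
  (G_row_solves (leqnn c.+1)) (leqnn c)) ?G_diag ?(G_below (ltnSn c)) //.
have -> : casoratian (G a) (G b) c =
    G a b.-1 * (- y) ^+ (c - b + 1) * q ^+ ('C(c, 2) - 'C(b.-1, 2)).
  have := casoratian_iter (c - b + 1) (G_row_solves ab1) (G_row_solves bb1) (leqnn _).
  rewrite prod_neg_yq casoratian_rows_start //.
  have -> : (b.-1 + (c - b + 1) = c)%N by lia.
  by move=> ->; rewrite mulrC mulrA.
by rewrite subnKC // subn1.
Qed.


Lemma F_as_entry a b : (a <= b)%N ->
  F (b - a) (x * q ^+ a) (y * q ^+ a) q = G a b.
Proof. by rewrite /Fmat_entry => ->. Qed.

Lemma Fz_as_entry a b : (a < b)%N ->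
  Fz (b%:Z - a%:Z - 2) (x * q ^+ a.+1) (y * q ^+ a.+1) q = G a.+1 (b - 1).
Proof.
move=> ab; rewrite -(subnKC ab); case: (b - a.+1)%N => [|m].
  have -> : (a.+1 + 0)%:Z - a%:Z - 2 = Negz 0 by rewrite NegzE; lia.
  by rewrite addn0 subn1 /= G_below.
have -> : (a.+1 + m.+1)%:Z - a%:Z - 2 = m%:Z by lia.
by rewrite -F_as_entry ?addnS ?subn1 /= ?leq_addr // addKn.
Qed.

Definition shift (u : nat -> nat) (i : nat) : nat := u i.+1.

Definition drop_second (u : nat -> nat) (j : nat) : nat :=
  if j is j'.+2 then u j'.+3 else u j.

(* The interlacing u_1 < u_2 < v_1 < u_3 < v_2 < ... < u_k < v_(k-1) < v_k,
   for k = n + 2. *)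
Definition interlaced (n : nat) (u v : nat -> nat) : Prop :=
  [/\ (u 1 < u 2)%N,
      (forall i, (1 <= i)%N -> (i <= n)%N -> (u i.+1 < v i)%N && (v i < u i.+2)%N),
      (u n.+2 < v n.+1)%N & (v n.+1 < v n.+2)%N].

Lemma interlaced_below_v1 n u v : interlaced n.+1 u v ->
  forall m, (m <= n)%N -> (v 1 < u m.+3)%N.
Proof.
case=> _ uv _ _; elim=> [|m IH] mn; first by case/andP: (uv 1%N isT isT).
case/andP: (uv m.+2 isT mn) => uv1 vu1.
exact: ltn_trans (IH (ltnW mn)) (ltn_trans uv1 vu1).
Qed.

(* The two minors of the first-column expansion are again interlaced. *)
Lemma interlaced_shift n u v :
  interlaced n.+1 u v -> interlaced n (shift u) (shift v).
Proof.
case=> _ uv uvn vvn; case/andP: (uv 1%N isT isT) => uv1 vu1.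
by split=> //; [exact: ltn_trans uv1 vu1 | move=> i _ iN; apply: uv].
Qed.

Lemma interlaced_drop_second n u v :
  interlaced n.+1 u v -> interlaced n (drop_second u) (shift v).
Proof.
case=> u12 uv uvn vvn; case/andP: (uv 1%N isT isT) => uv1 vu1.
split=> //; first exact: ltn_trans u12 (ltn_trans uv1 vu1).
by case=> [|i] // _ iN; apply: uv.
Qed.

(* The factor of the determinant that remains after F(u_1, u_2 - 1);
   it does not depend on u_1. *)
Definition det_tail (n : nat) (u v : nat -> nat) : R :=
  (- y) ^+ (\sum_(1 <= i < n.+2) (v i - u i.+1 + 1))%N
  * q ^+ (\sum_(1 <= i < n.+2) ('C(v i, 2) - 'C(u i.+1 - 1, 2)))%N
  * G (v n.+1).+1 (v n.+2)
  * \prod_(1 <= i < n.+1) G (v i).+1 (u i.+2 - 1).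

Lemma det_tail_ext n u u' v : (forall i, (2 <= i)%N -> u i = u' i) ->
  det_tail n u v = det_tail n u' v.
Proof.
move=> uu'; rewrite /det_tail.
congr (_ ^+ _ * _ ^+ _ * _ * _); apply: eq_big_nat => i /andP [i1 _];
  by rewrite !uu'.
Qed.

Lemma det_tail0 u v : det_tail 0 u v =
  (- y) ^+ (v 1 - u 2 + 1) * q ^+ ('C(v 1, 2) - 'C(u 2 - 1, 2)) * G (v 1).+1 (v 2).
Proof. by rewrite /det_tail !big_nat1 big_geq // mulr1. Qed.

Lemma det_tail_rec n u v : det_tail n.+1 u v =
  (- y) ^+ (v 1 - u 2 + 1) * q ^+ ('C(v 1, 2) - 'C(u 2 - 1, 2))
  * G (v 1).+1 (u 3 - 1) * det_tail n (shift u) (shift v).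
Proof.
rewrite /det_tail (big_nat_recl n.+2 _ (fun i => v i - u i.+1 + 1)%N) //.
rewrite (big_nat_recl n.+2 _ (fun i => 'C(v i, 2) - 'C(u i.+1 - 1, 2))%N) //.
by rewrite (big_nat_recl n.+1 _ (fun i => G (v i).+1 (u i.+2 - 1))) // !exprD; ring.
Qed.

(* The factorisation, by induction on k: both minors of the first-column
   expansion share the tail, and the two-row minor formula recombines
   their leading factors. *)
Theorem det_Fsub_interlaced n u v : interlaced n u v ->
  \det (Fsub x y q n.+2 u v) = G (u 1) (u 2 - 1) * det_tail n u v.
Proof.
elim: n u v => [|n IH] u v Huv.
  case: Huv => u12 _ uv vv; rewrite det_first_col_two; last by case=> [[|[|i]]].
  rewrite !mxE !det_mx11 !mxE /= two_row_minor ?(ltnW uv) ?(ltnW vv) //.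
  by rewrite det_tail0 !mulrA.
rewrite det_first_col_two; last first.
  case=> [[|[|i]]] //= iN _; rewrite mxE G_below //.
  exact: interlaced_below_v1 Huv i iN.
have -> : row' ord0 (col' ord0 (Fsub x y q n.+3 u v)) =
    Fsub x y q n.+2 (shift u) (shift v) by apply/matrixP=> i j; rewrite !mxE.
have -> : row' (lift ord0 ord0) (col' ord0 (Fsub x y q n.+3 u v)) =
    Fsub x y q n.+2 (drop_second u) (shift v).
  by apply/matrixP=> [[[|i] Hi] j]; rewrite !mxE.
rewrite (IH _ _ (interlaced_shift Huv)) (IH _ _ (interlaced_drop_second Huv)).
rewrite (@det_tail_ext n (drop_second u) (shift u)); last by case=> [|[|i]].
case: Huv => u12 uv _ _; case/andP: (uv 1%N isT isT) => uv1 vu1.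
have v1u3 : (v 1 <= u 3 - 1)%N by lia.
rewrite det_tail_rec; move: (det_tail n (shift u) (shift v)) => T.
by rewrite !mxE /shift /= !mulrA -mulrBl two_row_minor ?(ltnW uv1) // !mulrA.
Qed.

End InfiniteMatrix.

Theorem theorem5p4 (R : comRingType) (x y q : R) (k : nat) (u v : nat -> nat) :
  (2 <= k)%N ->
  (u 1 < u 2)%N ->
  (forall i : nat, (1 <= i)%N -> (i <= k - 2)%N ->
      (u i.+1 < v i)%N && (v i < u i.+2)%N) ->
  (u k < v k.-1)%N -> (v k.-1 < v k)%N ->
  \det (Fsub x y q k u v) =
    (- y) ^+ (\sum_(1 <= i < k) (v i - u i.+1 + 1))%N
    * q ^+ (\sum_(1 <= i < k) ('C(v i, 2) - 'C(u i.+1 - 1, 2)))%N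
    * F (u 2%N - u 1%N - 1) (x * q ^+ u 1%N) (y * q ^+ u 1%N) q
    * F (v k - v k.-1 - 1) (x * q ^+ (v k.-1).+1) (y * q ^+ (v k.-1).+1) q
    * \prod_(1 <= i < k.-1)
        Fz ((u i.+2)%:Z - (v i)%:Z - 2) (x * q ^+ (v i).+1) (y * q ^+ (v i).+1) q.
Proof.
case: k => [|[|n]] // _ u12 uv ukv vv.
have Huv : interlaced n u v by split=> // i i1 iN; apply: uv; rewrite ?subn2.
rewrite det_Fsub_interlaced // /det_tail /=.
rewrite subnAC F_as_entry; last lia.
rewrite -subnDA addn1 F_as_entry //.
case: (Huv) => _ uvn _ _.
under [X in _ = _ * X]eq_big_nat => i /andP [i1 iN].
  rewrite Fz_as_entry; last by case/andP: (uvn i i1 iN).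
  over.
ring.
Qed.
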